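(* Let $K$ be a closed convex cone in a finite-dimensional real Euclidean space $\mathbb{E}$. If $K$ is facially dual complete, then for every face $F$ of $K$ with $F\neq K$ and every $x\in F$, \[ \mathcal{T}(x;K)\cap \operatorname{span} F = \mathcal{T}(x;F). \] That is, every facially dual complete closed convex cone is tangentially exposed.
   Context: $\mathbb{E}$ is identified with its dual via the inner product. For a closed convex set $C$ and $x\in C$, the tangent cone is $\mathcal{T}(x;C)=\operatorname{cl}\{d\in\mathbb{E}: x+\epsilon d\in C \text{ for some } \epsilon>0\}$. A face of a closed convex set $C$ is a closed convex subset $F\subseteq C$ such that whenever $x\in F$, $y,z\in C$ and $x$ lies in the open segment $(y,z)$, then $y,z\in F$. For a closed convex cone $K$, $K^*=\{s:\langle s,x\rangle\ge 0\ \forall x\in K\}$, and for $F\subseteq \mathbb{E}$, $F^\perp=\{s:\langle s,x\rangle=0\ \forall x\in F\}$. $K$ is facially dual complete (FDC, ''nice'') if $K^*+F^\perp$ is closed for every nonempty face $F\neq K$ of $K$. A closed convex cone $K$ is tangentially exposed if $\mathcal{T}(x;K)\cap\operatorname{span}F=\mathcal{T}(x;F)$ for every face $F\neq K$ of $K$ and every $x\in F$. *)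

(* E = R^n, vectors are functions Fin.t n -> R, standard inner product. *)
From Stdlib Require Import Reals.
From Stdlib Require Fin.
Open Scope R_scope.

Definition vec (n : nat) : Type := Fin.t n -> R.

Fixpoint sumFin (n : nat) : (Fin.t n -> R) -> R :=
  match n return (Fin.t n -> R) -> R with
  | O => fun _ => 0
  | S m => fun f => f Fin.F1 + sumFin m (fun i => f (Fin.FS i))
  end.

Definition vzero {n} : vec n := fun _ => 0.
Definition vadd {n} (x y : vec n) : vec n := fun i => x i + y i.
Definition vscal {n} (t : R) (x : vec n) : vec n := fun i => t * x i.
Definition vsub {n} (x y : vec n) : vec n := fun i => x i - y i.

Definition dot {n} (x y : vec n) : R := sumFin n (fun i => x i * y i).

Definition cl {n} (A : vec n -> Prop) : vec n -> Prop :=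
  fun x => forall eps, 0 < eps -> exists y, A y /\ dot (vsub x y) (vsub x y) < eps.

Definition is_closed {n} (A : vec n -> Prop) : Prop := forall x, cl A x -> A x.

Definition is_convex {n} (A : vec n -> Prop) : Prop :=
  forall x y t, A x -> A y -> 0 <= t <= 1 ->
    A (vadd (vscal (1 - t) x) (vscal t y)).

Definition is_cone {n} (K : vec n -> Prop) : Prop :=
  K vzero /\ forall x t, K x -> 0 <= t -> K (vscal t x).

Definition set_eq {n} (A B : vec n -> Prop) : Prop := forall x, A x <-> B x.

Definition subset {n} (A B : vec n -> Prop) : Prop := forall x, A x -> B x.

Definition in_open_seg {n} (x y z : vec n) : Prop :=
  exists t, 0 < t < 1 /\ x = vadd (vscal (1 - t) y) (vscal t z).

Definition is_face {n} (F C : vec n -> Prop) : Prop :=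
  is_closed F /\ is_convex F /\ subset F C /\
  forall x y z, F x -> C y -> C z -> in_open_seg x y z -> F y /\ F z.

Definition tangent_cone {n} (x : vec n) (C : vec n -> Prop) : vec n -> Prop :=
  cl (fun d => exists eps, 0 < eps /\ C (vadd x (vscal eps d))).

Inductive in_span {n} (F : vec n -> Prop) : vec n -> Prop :=
  | span_zero : in_span F vzero
  | span_mem : forall x, F x -> in_span F x
  | span_add : forall x y, in_span F x -> in_span F y -> in_span F (vadd x y)
  | span_scal : forall t x, in_span F x -> in_span F (vscal t x).

Definition dual_cone {n} (K : vec n -> Prop) : vec n -> Prop :=
  fun s => forall x, K x -> 0 <= dot s x.

Definition perp {n} (F : vec n -> Prop) : vec n -> Prop :=
  fun s => forall x, F x -> dot s x = 0.

Definition set_sum {n} (A B : vec n -> Prop) : vec n -> Prop :=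
  fun v => exists a b, A a /\ B b /\ v = vadd a b.

Definition FDC {n} (K : vec n -> Prop) : Prop :=
  forall F, is_face F K -> (exists x, F x) -> ~ set_eq F K ->
    is_closed (set_sum (dual_cone K) (perp F)).

Definition tangentially_exposed {n} (K : vec n -> Prop) : Prop :=
  forall F, is_face F K -> ~ set_eq F K -> forall x, F x ->
    set_eq (fun d => tangent_cone x K d /\ in_span F d) (tangent_cone x F).

(* Let [d ∈ T(x;K) ∩ span F] and suppose [d ∉ T(x;F)].  Separating [d] from the closed
   convex cone [T(x;F)] gives [s] with [⟨s,d⟩ < 0] that is nonnegative on [T(x;F)]; hence
   [⟨s,x⟩ = 0] and [s] is nonnegative on [F].  Since [K* + F^⊥] is closed, [s] belongs to it:
   otherwise a second separation yields [y ∈ K ∩ (F^⊥)^⊥ = K ∩ span F = F] with [⟨s,y⟩ < 0].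
   Writing [s = k + g] with [k ∈ K*], [g ∈ F^⊥], we get [⟨k,x⟩ = 0], so [k] is nonnegative on
   [T(x;K)], and [⟨s,d⟩ = ⟨k,d⟩ ≥ 0], a contradiction.  The reverse inclusion holds because
   [span F] is closed. *)

From Stdlib Require Import Reals Lra Psatz Classical ClassicalEpsilon FunctionalExtensionality.
From Stdlib Require Fin.
Open Scope R_scope.

Notation sq v := (dot v v).

Ltac vec_ext := apply functional_extensionality; intro; unfold vadd, vscal, vsub, vzero.

Lemma sumFin_ext n (f g : Fin.t n -> R) : (forall i, f i = g i) -> sumFin n f = sumFin n g.
Proof.
  induction n as [|n IH]; simpl; intros H; [reflexivity|].
  rewrite H, (IH (fun i => f (Fin.FS i)) (fun i => g (Fin.FS i))); auto.
Qed.

Lemma sumFin_add n (f g : Fin.t n -> R) :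
  sumFin n (fun i => f i + g i) = sumFin n f + sumFin n g.
Proof.
  induction n as [|n IH]; simpl; [lra|].
  rewrite (IH (fun i => f (Fin.FS i)) (fun i => g (Fin.FS i))). lra.
Qed.

Lemma sumFin_scal n c (f : Fin.t n -> R) : sumFin n (fun i => c * f i) = c * sumFin n f.
Proof. induction n as [|n IH]; simpl; [lra|]. rewrite (IH (fun i => f (Fin.FS i))). lra. Qed.

Lemma sumFin_nonneg n (f : Fin.t n -> R) : (forall i, 0 <= f i) -> 0 <= sumFin n f.
Proof.
  induction n as [|n IH]; simpl; intros H; [lra|].
  pose proof (H Fin.F1). pose proof (IH (fun i => f (Fin.FS i)) (fun i => H _)). lra.
Qed.

Lemma sumFin_ge_term n (i : Fin.t n) (f : Fin.t n -> R) :
  (forall j, 0 <= f j) -> f i <= sumFin n f.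
Proof.
  induction i as [n|n i IH]; intros H; simpl.
  - pose proof (sumFin_nonneg n (fun j => f (Fin.FS j)) (fun j => H _)). lra.
  - pose proof (IH (fun j => f (Fin.FS j)) (fun j => H _)). pose proof (H Fin.F1). lra.
Qed.

Lemma Un_cv_const (c : R) : Un_cv (fun _ => c) c.
Proof. intros e He. exists 0%nat. intros. unfold R_dist. rewrite Rminus_diag, Rabs_R0. lra. Qed.

Lemma sumFin_cv n (f : nat -> Fin.t n -> R) (g : Fin.t n -> R) :
  (forall i, Un_cv (fun k => f k i) (g i)) -> Un_cv (fun k => sumFin n (f k)) (sumFin n g).
Proof.
  induction n as [|n IH]; simpl; intros H; [apply Un_cv_const|].
  apply CV_plus; [apply H|].
  apply (IH (fun k i => f k (Fin.FS i)) (fun i => g (Fin.FS i))). intros; apply H.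
Qed.

Section InnerProduct.
Context {n : nat}.
Implicit Types a b c : vec n.

Lemma dot_comm a b : dot a b = dot b a.
Proof. apply sumFin_ext. intros; ring. Qed.

Lemma dot_add_l a b c : dot (vadd a b) c = dot a c + dot b c.
Proof. unfold dot, vadd. rewrite <- sumFin_add. apply sumFin_ext. intros; ring. Qed.

Lemma dot_scal_l t a c : dot (vscal t a) c = t * dot a c.
Proof. unfold dot, vscal. rewrite <- sumFin_scal. apply sumFin_ext. intros; ring. Qed.

Lemma dot_sub_l a b c : dot (vsub a b) c = dot a c - dot b c.
Proof.
  replace (vsub a b) with (vadd a (vscal (-1) b)) by (vec_ext; ring).
  rewrite dot_add_l, dot_scal_l. ring.
Qed.

Lemma dot_zero_l a : dot vzero a = 0.
Proof. replace (@vzero n) with (vscal 0 a) by (vec_ext; ring). rewrite dot_scal_l. ring. Qed.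

Lemma dot_add_r a b c : dot c (vadd a b) = dot c a + dot c b.
Proof. rewrite !(dot_comm c). apply dot_add_l. Qed.

Lemma dot_scal_r t a c : dot c (vscal t a) = t * dot c a.
Proof. rewrite !(dot_comm c). apply dot_scal_l. Qed.

Lemma dot_sub_r a b c : dot c (vsub a b) = dot c a - dot c b.
Proof. rewrite !(dot_comm c). apply dot_sub_l. Qed.

Lemma dot_zero_r a : dot a vzero = 0.
Proof. rewrite dot_comm. apply dot_zero_l. Qed.

Lemma dot_nonneg a : 0 <= sq a.
Proof. apply sumFin_nonneg. intros; nra. Qed.

Lemma coord_sq_le a i : (a i)^2 <= sq a.
Proof.
  assert (H : a i * a i <= sq a) by (apply (sumFin_ge_term n i (fun j => a j * a j)); intros; nra).
  nra.
Qed.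

Lemma sq_eq0 a : sq a = 0 -> a = vzero.
Proof. intros H. vec_ext. pose proof (coord_sq_le a x). pose proof (dot_nonneg a). nra. Qed.

Lemma sq_sub_eq0 a b : sq (vsub a b) = 0 -> a = b.
Proof.
  intros H. apply sq_eq0 in H. vec_ext.
  apply (f_equal (fun v => v x)) in H. unfold vsub, vzero in H. lra.
Qed.

End InnerProduct.

Ltac dot_simpl := repeat progress rewrite ?dot_add_l, ?dot_add_r, ?dot_sub_l, ?dot_sub_r,
  ?dot_scal_l, ?dot_scal_r, ?dot_zero_l, ?dot_zero_r.
Tactic Notation "dot_simpl" "in" hyp(H) := repeat progress rewrite ?dot_add_l, ?dot_add_r,
  ?dot_sub_l, ?dot_sub_r, ?dot_scal_l, ?dot_scal_r, ?dot_zero_l, ?dot_zero_r in H.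

Section Euclid.
Context {n : nat}.
Implicit Types a b u v : vec n.

Lemma cauchy_schwarz a b : (dot a b)^2 <= sq a * sq b.
Proof.
  destruct (Req_dec (sq b) 0) as [Hb|Hb].
  - apply sq_eq0 in Hb. subst. rewrite !dot_zero_r. pose proof (dot_nonneg a). nra.
  - pose proof (dot_nonneg b).
    set (t := dot a b / sq b).
    pose proof (dot_nonneg (vsub a (vscal t b))) as Ht. dot_simpl in Ht.
    rewrite (dot_comm b a) in Ht.
    replace (dot a b) with (t * sq b) in * by (unfold t; field; lra). nra.
Qed.

Lemma sq_add_le u v : sq (vadd u v) <= 2 * sq u + 2 * sq v.
Proof.
  pose proof (dot_nonneg (vsub u v)) as H. dot_simpl. dot_simpl in H.
  rewrite (dot_comm v u) in *. lra.
Qed.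

Lemma sq_scal t u : sq (vscal t u) = t^2 * sq u.
Proof. dot_simpl. ring. Qed.

End Euclid.

Lemma vsub_diag {n} (x : vec n) : vsub x x = vzero.
Proof. vec_ext. ring. Qed.

Section Closure.
Context {n : nat}.
Implicit Types A B : vec n -> Prop.

Lemma subset_cl A : subset A (cl A).
Proof. intros x Hx e He. exists x. split; auto. rewrite vsub_diag, dot_zero_l. lra. Qed.

Lemma cl_mono A B : subset A B -> subset (cl A) (cl B).
Proof. intros AB x Hx e He. destruct (Hx e He) as [y [Hy Hd]]. exists y; auto. Qed.

Lemma cl_closed A : is_closed (cl A).
Proof.
  intros z Hz e He.
  destruct (Hz (e/4)) as [y [Hy H1]]; [lra|].
  destruct (Hy (e/4)) as [y' [Hy' H2]]; [lra|].
  exists y'. split; auto.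
  replace (vsub z y') with (vadd (vsub z y) (vsub y y')) by (vec_ext; ring).
  pose proof (sq_add_le (vsub z y) (vsub y y')). lra.
Qed.

Lemma cl_convex A : is_convex A -> is_convex (cl A).
Proof.
  intros HA x y t Hx Hy [Ht0 Ht1] e He.
  destruct (Hx (e/4)) as [x' [Hx' H1]]; [lra|].
  destruct (Hy (e/4)) as [y' [Hy' H2]]; [lra|].
  exists (vadd (vscal (1 - t) x') (vscal t y')). split; [apply HA; auto; lra|].
  replace (vsub (vadd (vscal (1 - t) x) (vscal t y)) (vadd (vscal (1 - t) x') (vscal t y')))
    with (vadd (vscal (1 - t) (vsub x x')) (vscal t (vsub y y'))) by (vec_ext; ring).
  pose proof (sq_add_le (vscal (1 - t) (vsub x x')) (vscal t (vsub y y'))) as H.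
  rewrite !sq_scal in H.
  pose proof (dot_nonneg (vsub x x')). pose proof (dot_nonneg (vsub y y')).
  assert ((1 - t)^2 <= 1) by nra. assert (t^2 <= 1) by nra.
  nra.
Qed.

Lemma cl_cone A : is_cone A -> is_cone (cl A).
Proof.
  intros [H0 Hs]. split; [apply subset_cl; auto|].
  intros x t Hx Ht e He.
  destruct (Hx (e / (t^2 + 1))) as [x' [Hx' H1]]; [apply Rdiv_lt_0_compat; nra|].
  exists (vscal t x'). split; auto.
  replace (vsub (vscal t x) (vscal t x')) with (vscal t (vsub x x')) by (vec_ext; ring).
  rewrite sq_scal. pose proof (dot_nonneg (vsub x x')).
  apply Rmult_lt_compat_r with (r := t^2 + 1) in H1; [|nra].
  unfold Rdiv in H1. rewrite Rmult_assoc, Rinv_l in H1 by nra. nra.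
Qed.

Lemma cl_dot_nonneg A k :
  (forall a, A a -> 0 <= dot k a) -> forall z, cl A z -> 0 <= dot k z.
Proof.
  intros H z Hz. apply Rnot_lt_le. intros Hkz.
  set (d := - dot k z). pose proof (dot_nonneg k).
  destruct (Hz (d * d / (sq k + 1))) as [y [Hy Hd]].
  { unfold d. apply Rdiv_lt_0_compat; nra. }
  pose proof (H y Hy). pose proof (cauchy_schwarz k (vsub z y)) as CS.
  rewrite dot_sub_r in CS.
  assert (d * d <= (dot k z - dot k y)^2) by (unfold d in *; nra).
  apply Rmult_lt_compat_r with (r := sq k + 1) in Hd; [|lra].
  unfold Rdiv in Hd. rewrite Rmult_assoc, Rinv_l in Hd by lra.
  pose proof (dot_nonneg (vsub z y)). nra.
Qed.

End Closure.

Lemma RinvN_eventually_lt e : 0 < e -> exists N, forall k, (N <= k)%nat -> RinvN k < e.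
Proof.
  intros He. destruct (RinvN_cv He) as [N HN]. exists N. intros k Hk.
  specialize (HN k Hk). pose proof (cond_pos (RinvN k)).
  unfold R_dist in HN. rewrite Rminus_0_r, Rabs_right in HN; lra.
Qed.

Section Projection.
Context {n : nat}.
Implicit Types C : vec n -> Prop.

Lemma vec_cauchy_cv (c : nat -> vec n) :
  (forall e, 0 < e -> exists N, forall k l, (N <= k)%nat -> (N <= l)%nat ->
     sq (vsub (c k) (c l)) < e) ->
  exists p : vec n, forall i, Un_cv (fun k => c k i) (p i).
Proof.
  intros Hc.
  assert (Hcc : forall i, Cauchy_crit (fun k => c k i)).
  { intros i e He. destruct (Hc (e * e)) as [N HN]; [nra|].
    exists N. intros k l Hk Hl. unfold R_dist.
    pose proof (coord_sq_le (vsub (c k) (c l)) i) as Hi. unfold vsub at 1 in Hi.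
    specialize (HN k l Hk Hl). apply Rabs_def1; nra. }
  exists (fun i => proj1_sig (R_complete _ (Hcc i))).
  intros i. exact (proj2_sig (R_complete _ (Hcc i))).
Qed.

Lemma sq_sub_cv (c : nat -> vec n) p z :
  (forall i, Un_cv (fun k => c k i) (p i)) ->
  Un_cv (fun k => sq (vsub z (c k))) (sq (vsub z p)).
Proof.
  intros Hp. apply (sumFin_cv n (fun k i => (z i - c k i) * (z i - c k i))).
  intros i. apply CV_mult; apply CV_minus; auto using Un_cv_const.
Qed.

Lemma closed_cv C (c : nat -> vec n) p :
  is_closed C -> (forall k, C (c k)) -> (forall i, Un_cv (fun k => c k i) (p i)) -> C p.
Proof.
  intros Hcl Hc Hp. apply Hcl. intros e He.
  destruct (sq_sub_cv c p p Hp e He) as [N HN].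
  exists (c N). split; auto.
  specialize (HN N (le_n N)). rewrite vsub_diag, dot_zero_l in HN.
  pose proof (dot_nonneg (vsub p (c N))).
  unfold R_dist in HN. rewrite Rminus_0_r, Rabs_right in HN; lra.
Qed.

(* Parallelogram law applied to [z - a], [z - b] and the midpoint of [a] and [b]. *)
Lemma near_minimizers_close C z m a b :
  is_convex C -> (forall c, C c -> m <= sq (vsub z c)) -> C a -> C b ->
  sq (vsub a b) <= 2 * (sq (vsub z a) - m) + 2 * (sq (vsub z b) - m).
Proof.
  intros Hcv Hlow Ha Hb.
  assert (Hmid := Hlow _ (Hcv a b (/2) Ha Hb ltac:(lra))).
  replace (vsub z (vadd (vscal (1 - /2) a) (vscal (/2) b)))
    with (vscal (/2) (vadd (vsub z a) (vsub z b))) in Hmid by (vec_ext; field).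
  replace (vsub a b) with (vsub (vsub z b) (vsub z a)) by (vec_ext; ring).
  set (u := vsub z a) in *. set (v := vsub z b) in *.
  dot_simpl. dot_simpl in Hmid. rewrite (dot_comm u v) in *. lra.
Qed.

Lemma nearest_point C z : is_closed C -> is_convex C -> (exists c, C c) ->
  exists p, C p /\ forall c, C c -> sq (vsub z p) <= sq (vsub z c).
Proof.
  intros Hcl Hcv [c0 Hc0].
  destruct (completeness (fun r => exists c, C c /\ r = - sq (vsub z c))) as [M [HM1 HM2]].
  { exists 0. intros r [c [_ ->]]. pose proof (dot_nonneg (vsub z c)). lra. }
  { exists (- sq (vsub z c0)), c0. auto. }
  set (m := - M).
  assert (Hlow : forall c, C c -> m <= sq (vsub z c)).
  { intros c Hc. enough (- sq (vsub z c) <= M) by (unfold m; lra). apply HM1. exists c; auto. }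
  assert (Happ : forall k, exists c, C c /\ sq (vsub z c) < m + RinvN k).
  { intros k. pose proof (cond_pos (RinvN k)). apply NNPP. intros Hn.
    enough (M <= M - RinvN k) by lra. apply HM2. intros r [c [Hc ->]].
    destruct (Rlt_or_le (sq (vsub z c)) (m + RinvN k)); [exfalso; eauto|unfold m in *; lra]. }
  destruct (choice _ Happ) as [c Hc].
  destruct (vec_cauchy_cv c) as [p Hp].
  { intros e He. destruct (RinvN_eventually_lt (e/4)) as [N HN]; [lra|].
    exists N. intros k l Hk Hl.
    pose proof (near_minimizers_close C z m _ _ Hcv Hlow (proj1 (Hc k)) (proj1 (Hc l))).
    pose proof (HN k Hk). pose proof (HN l Hl). pose proof (proj2 (Hc k)). pose proof (proj2 (Hc l)).
    lra. }
  exists p. split; [exact (closed_cv C c p Hcl (fun k => proj1 (Hc k)) Hp)|].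
  intros c' Hc'. apply Rle_trans with m; [|auto].
  replace m with (m + 0) by ring.
  apply (Rle_cv_lim (Un := fun k => sq (vsub z (c k))) (Vn := fun k => m + RinvN k)).
  - intros k. left. apply Hc.
  - apply sq_sub_cv; auto.
  - apply CV_plus; [apply Un_cv_const|apply RinvN_cv].
Qed.

Lemma nearest_point_obtuse C z p :
  is_convex C -> C p -> (forall c, C c -> sq (vsub z p) <= sq (vsub z c)) ->
  forall c, C c -> dot (vsub z p) (vsub c p) <= 0.
Proof.
  intros Hcv Cp Hp c Hc.
  set (a := dot (vsub z p) (vsub c p)). set (b := sq (vsub c p)).
  assert (Hb : 0 <= b) by apply dot_nonneg.
  apply Rnot_lt_le. intros Ha.
  (* moving from [p] towards [c] by the step [t] strictly decreases the distance to [z] *)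
  set (t := a / (a + b)).
  assert (Ht : t * (a + b) = a) by (unfold t; field; lra).
  assert (0 < t <= 1).
  { split; [unfold t; apply Rdiv_lt_0_compat; lra|].
    apply Rmult_le_reg_r with (a + b); lra. }
  assert (Cw := Hp _ (Hcv p c t Cp Hc ltac:(lra))).
  replace (vsub z (vadd (vscal (1 - t) p) (vscal t c)))
    with (vsub (vsub z p) (vscal t (vsub c p))) in Cw by (vec_ext; ring).
  set (u := vsub z p) in *. set (w := vsub c p) in *.
  dot_simpl in Cw. rewrite (dot_comm w u) in Cw. fold a b in Cw.
  nra.
Qed.

Lemma cone_projection C z : is_closed C -> is_convex C -> is_cone C ->
  exists p, C p /\ (forall c, C c -> dot (vsub z p) c <= 0) /\ dot (vsub z p) p = 0.
Proof.
  intros Hcl Hcv [C0 Cs].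
  destruct (nearest_point C z Hcl Hcv (ex_intro _ vzero C0)) as [p [Cp Hp]].
  pose proof (nearest_point_obtuse C z p Hcv Cp Hp) as Hobt.
  assert (A0 := Hobt vzero C0). assert (A2 := Hobt (vscal 2 p) (Cs p 2 Cp ltac:(lra))).
  replace (vsub vzero p) with (vscal (-1) p) in A0 by (vec_ext; ring).
  replace (vsub (vscal 2 p) p) with p in A2 by (vec_ext; ring).
  rewrite dot_scal_r in A0.
  exists p. split; [exact Cp|split; [|lra]].
  intros c Hc. pose proof (Hobt c Hc) as H. rewrite dot_sub_r in H. lra.
Qed.

Lemma cone_separation C z : is_closed C -> is_convex C -> is_cone C -> ~ C z ->
  exists y, (forall c, C c -> 0 <= dot y c) /\ dot y z < 0.
Proof.
  intros Hcl Hcv Hcone Hz.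
  destruct (cone_projection C z Hcl Hcv Hcone) as [p [Cp [Hc Hp]]].
  assert (Hpos : 0 < sq (vsub z p)).
  { destruct (dot_nonneg (vsub z p)) as [|E]; auto.
    symmetry in E. apply sq_sub_eq0 in E. subst. contradiction. }
  exists (vsub p z). split.
  - intros c Cc. specialize (Hc c Cc).
    replace (vsub p z) with (vscal (-1) (vsub z p)) by (vec_ext; ring). rewrite dot_scal_l. lra.
  - replace (vsub p z) with (vscal (-1) (vsub z p)) by (vec_ext; ring). rewrite dot_scal_l.
    replace z with (vadd (vsub z p) p) at 2 by (vec_ext; ring). rewrite dot_add_r. lra.
Qed.

End Projection.

Definition is_subspace {n} (V : vec n -> Prop) : Prop :=
  V vzero /\ (forall a b, V a -> V b -> V (vadd a b)) /\ (forall t a, V a -> V (vscal t a)).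

Section ClosedSets.
Context {n : nat}.
Implicit Types A B V : vec n -> Prop.

Lemma closed_ext A B : set_eq A B -> is_closed A -> is_closed B.
Proof.
  intros E HA x Hx. apply E, HA. intros e He.
  destruct (Hx e He) as [y [Hy Hd]]. exists y. split; [apply E|]; auto.
Qed.

Lemma closed_and A B : is_closed A -> is_closed B -> is_closed (fun x => A x /\ B x).
Proof.
  intros HA HB x Hx.
  split; [apply HA|apply HB]; intros e He; destruct (Hx e He) as [y [[Ay By] Hd]]; exists y; auto.
Qed.

Lemma closed_coord_eq0 i : is_closed (fun x : vec n => x i = 0).
Proof.
  intros x Hx. apply NNPP. intros Hxi.
  destruct (Hx ((x i)^2)) as [y [Hy Hd]]; [nra|].
  pose proof (coord_sq_le (vsub x y) i) as H. unfold vsub at 1 in H.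
  rewrite Hy, Rminus_0_r in H. lra.
Qed.

Lemma subspace_convex V : is_subspace V -> is_convex V.
Proof. intros [_ [Vadd Vscal]] x y t Hx Hy _. auto. Qed.

Lemma subspace_cone V : is_subspace V -> is_cone V.
Proof. intros [V0 [_ Vscal]]. split; auto. Qed.

End ClosedSets.

Lemma closed_preimage {n m} (A : vec m -> Prop) (f : vec n -> vec m) L :
  (forall x y, sq (vsub (f x) (f y)) <= L * sq (vsub x y)) ->
  is_closed A -> is_closed (fun x => A (f x)).
Proof.
  intros Hf HA x Hx. apply HA. intros e He.
  assert (HL : 0 < Rabs L + 1) by (pose proof (Rabs_pos L); lra).
  destruct (Hx (e / (Rabs L + 1))) as [y [Hy Hd]]; [apply Rdiv_lt_0_compat; lra|].
  exists (f y). split; auto.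
  pose proof (Hf x y). pose proof (dot_nonneg (vsub x y)). pose proof (Rle_abs L).
  apply Rmult_lt_compat_r with (r := Rabs L + 1) in Hd; [|lra].
  unfold Rdiv in Hd. rewrite Rmult_assoc, Rinv_l in Hd by lra. nra.
Qed.

Definition vcons {m} (a : R) (u : vec m) : vec (S m) := fun i => Fin.caseS' i (fun _ => R) a u.
Definition vtl {m} (v : vec (S m)) : vec m := fun i => v (Fin.FS i).

Section Cons.
Context {m : nat}.

Lemma vcons_vtl (v : vec (S m)) : v Fin.F1 = 0 -> vcons 0 (vtl v) = v.
Proof. intros H. apply functional_extensionality. intro i. pattern i. apply Fin.caseS'; auto. Qed.

Lemma vcons_zero : vcons 0 vzero = (vzero : vec (S m)).
Proof. apply functional_extensionality. intro i. pattern i. apply Fin.caseS'; reflexivity. Qed.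

Lemma vcons_add a b (u w : vec m) : vadd (vcons a u) (vcons b w) = vcons (a + b) (vadd u w).
Proof. apply functional_extensionality. intro i. pattern i. apply Fin.caseS'; reflexivity. Qed.

Lemma vcons_scal t a (u : vec m) : vscal t (vcons a u) = vcons (t * a) (vscal t u).
Proof. apply functional_extensionality. intro i. pattern i. apply Fin.caseS'; reflexivity. Qed.

Lemma vsub_vtl (a b : vec (S m)) : vsub (vtl a) (vtl b) = vtl (vsub a b).
Proof. reflexivity. Qed.

Lemma sq_vtl_le (v : vec (S m)) : sq (vtl v) <= sq v.
Proof. change (sq v) with (v Fin.F1 * v Fin.F1 + sq (vtl v)). nra. Qed.

End Cons.

(* Induction on the dimension: the slice [{u | (0, u) ∈ V}] is closed, and [V] is a
   Lipschitz preimage of it (intersected with [{z | z_1 = 0}] when [V] has no vector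
   with nonzero first coordinate). *)
Lemma subspace_closed n (V : vec n -> Prop) : is_subspace V -> is_closed V.
Proof.
  revert V. induction n as [|m IH]; intros V HV.
  - intros z _. replace z with (@vzero 0); [apply HV|].
    apply functional_extensionality. intro i. exact (Fin.case0 (fun i => vzero i = z i) i).
  - pose proof HV as [V0 [Vadd Vscal]].
    set (W := fun u : vec m => V (vcons 0 u)).
    assert (HW : is_closed W).
    { apply IH. unfold W. split; [|split].
      - rewrite vcons_zero. auto.
      - intros a b Ha Hb. replace 0 with (0 + 0) by ring. rewrite <- vcons_add. auto.
      - intros t a Ha. replace 0 with (t * 0) by ring. rewrite <- vcons_scal. auto. }
    destruct (classic (exists v, V v /\ v Fin.F1 <> 0)) as [[v [Hv Hv1]]|Hnone].
    + set (e := vscal (/ v Fin.F1) v).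
      assert (He1 : e Fin.F1 = 1) by (unfold e, vscal; field; auto).
      set (proj := fun z : vec (S m) => vtl (vsub z (vscal (z Fin.F1) e))).
      assert (Hproj1 : forall z, vsub z (vscal (z Fin.F1) e) Fin.F1 = 0)
        by (intros z; unfold vsub, vscal; rewrite He1; ring).
      apply (closed_ext (fun z => W (proj z))).
      * intros z. unfold W, proj. rewrite vcons_vtl by apply Hproj1. split; intros Hz.
        -- replace z with (vadd (vsub z (vscal (z Fin.F1) e)) (vscal (z Fin.F1) e))
             by (vec_ext; ring). unfold e in *. auto.
        -- replace (vsub z (vscal (z Fin.F1) e)) with (vadd z (vscal (- z Fin.F1) e))
             by (vec_ext; ring). unfold e. auto.
      * apply (closed_preimage W proj (2 + 2 * sq e)); auto.
        intros x y. unfold proj. rewrite vsub_vtl.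
        eapply Rle_trans; [apply sq_vtl_le|].
        replace (vsub (vsub x (vscal (x Fin.F1) e)) (vsub y (vscal (y Fin.F1) e)))
          with (vadd (vsub x y) (vscal (- (x Fin.F1 - y Fin.F1)) e)) by (vec_ext; ring).
        eapply Rle_trans; [apply sq_add_le|]. rewrite sq_scal.
        pose proof (coord_sq_le (vsub x y) Fin.F1) as H. unfold vsub at 1 in H.
        pose proof (dot_nonneg e). nra.
    + apply (closed_ext (fun z => z Fin.F1 = 0 /\ W (vtl z))).
      * intros z. unfold W. split.
        -- intros [Hz1 Hz]. rewrite vcons_vtl in Hz; auto.
        -- intros Hz. assert (Hz1 : z Fin.F1 = 0) by (apply NNPP; intro; apply Hnone; eauto).
           rewrite vcons_vtl; auto.
      * apply closed_and; [apply closed_coord_eq0|].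
        apply (closed_preimage W vtl 1); auto.
        intros x y. rewrite Rmult_1_l, vsub_vtl. apply sq_vtl_le.
Qed.

Section Span.
Context {n : nat}.
Implicit Types F : vec n -> Prop.

Lemma span_subspace F : is_subspace (in_span F).
Proof. split; [constructor|split]; intros; [apply span_add|apply span_scal]; auto. Qed.

Lemma span_closed F : is_closed (in_span F).
Proof. apply subspace_closed, span_subspace. Qed.

Lemma perp_span F g d : perp F g -> in_span F d -> dot g d = 0.
Proof.
  intros Hg Hd. induction Hd as [| x Hx | x y _ IH1 _ IH2 | t x _ IH].
  - apply dot_zero_r.
  - apply Hg; auto.
  - rewrite dot_add_r, IH1, IH2; ring.
  - rewrite dot_scal_r, IH; ring.
Qed.

End Span.

Section Cones.
Context {n : nat}.
Implicit Types A B C K F : vec n -> Prop.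

Lemma cone_add C a b : is_convex C -> is_cone C -> C a -> C b -> C (vadd a b).
Proof.
  intros Hcv [_ Cs] Ha Hb.
  replace (vadd a b) with (vscal 2 (vadd (vscal (1 - /2) a) (vscal (/2) b))) by (vec_ext; field).
  apply Cs; [apply Hcv; auto|]; lra.
Qed.

Lemma cone_span_diff C y : is_convex C -> is_cone C -> in_span C y ->
  exists a b, C a /\ C b /\ y = vsub a b.
Proof.
  intros Hcv Hcone Hy. pose proof Hcone as [C0 Cs].
  induction Hy as [| x Hx | x y _ [a1 [b1 [Ha1 [Hb1 ->]]]] _ [a2 [b2 [Ha2 [Hb2 ->]]]]
                  | t x _ [a [b [Ha [Hb ->]]]]].
  - exists vzero, vzero. repeat split; auto. vec_ext; ring.
  - exists x, vzero. repeat split; auto. vec_ext; ring.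
  - exists (vadd a1 a2), (vadd b1 b2).
    split; [|split]; [apply cone_add; auto|apply cone_add; auto|vec_ext; ring].
  - destruct (Rle_or_lt 0 t).
    + exists (vscal t a), (vscal t b). repeat split; auto. vec_ext; ring.
    + exists (vscal (- t) b), (vscal (- t) a).
      split; [|split]; [apply Cs; auto; lra|apply Cs; auto; lra|vec_ext; ring].
Qed.

Lemma set_sum_l A B a : A a -> B vzero -> set_sum A B a.
Proof. intros Ha B0. exists a, vzero. repeat split; auto. vec_ext; ring. Qed.

Lemma set_sum_r A B b : A vzero -> B b -> set_sum A B b.
Proof. intros A0 Hb. exists vzero, b. repeat split; auto. vec_ext; ring. Qed.

Lemma set_sum_convex A B : is_convex A -> is_convex B -> is_convex (set_sum A B).
Proof.
  intros HA HB s1 s2 t [a1 [b1 [Ha1 [Hb1 ->]]]] [a2 [b2 [Ha2 [Hb2 ->]]]] Ht.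
  exists (vadd (vscal (1 - t) a1) (vscal t a2)), (vadd (vscal (1 - t) b1) (vscal t b2)).
  repeat split; auto. vec_ext; ring.
Qed.

Lemma set_sum_cone A B : is_cone A -> is_cone B -> is_cone (set_sum A B).
Proof.
  intros [A0 As] [B0 Bs]. split.
  - exists vzero, vzero. repeat split; auto. vec_ext; ring.
  - intros s t [a [b [Ha [Hb ->]]]] Ht. exists (vscal t a), (vscal t b).
    repeat split; auto. vec_ext; ring.
Qed.

Lemma dual_cone_convex K : is_convex (dual_cone K).
Proof.
  intros s1 s2 t H1 H2 Ht z Kz. dot_simpl.
  specialize (H1 z Kz). specialize (H2 z Kz). nra.
Qed.

Lemma dual_cone_cone K : is_cone (dual_cone K).
Proof.
  split.
  - intros z _. rewrite dot_zero_l. lra.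
  - intros s t Hs Ht z Kz. rewrite dot_scal_l. specialize (Hs z Kz). nra.
Qed.

Lemma perp_subspace F : is_subspace (perp F).
Proof.
  split; [|split].
  - intros z _. apply dot_zero_l.
  - intros a b Ha Hb z Fz. rewrite dot_add_l, (Ha z Fz), (Hb z Fz). ring.
  - intros t a Ha z Fz. rewrite dot_scal_l, (Ha z Fz). ring.
Qed.

Lemma closed_cone_bidual K y : is_closed K -> is_convex K -> is_cone K ->
  (forall w, dual_cone K w -> 0 <= dot w y) -> K y.
Proof.
  intros Kcl Kcv Kcone Hy. apply NNPP. intros Hny.
  destruct (cone_separation K y Kcl Kcv Kcone Hny) as [w [Hw Hwy]].
  specialize (Hy w Hw). lra.
Qed.

Lemma span_perp_perp F y : (forall g, perp F g -> dot g y = 0) -> in_span F y.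
Proof.
  intros Hy. pose proof (span_subspace F) as HS.
  destruct (cone_projection (in_span F) y (span_closed F) (subspace_convex _ HS)
              (subspace_cone _ HS)) as [q [Sq [Hq Hqq]]].
  assert (Hperp : perp F (vsub y q)).
  { intros f Hf. pose proof (Hq f (span_mem _ _ Hf)).
    pose proof (Hq _ (span_scal _ (-1) _ (span_mem _ _ Hf))) as H'.
    rewrite dot_scal_r in H'. lra. }
  assert (E : sq (vsub y q) = 0).
  { pose proof (Hy _ Hperp). rewrite dot_sub_r. lra. }
  apply sq_sub_eq0 in E. subst. exact Sq.
Qed.

End Cones.

Definition feas_dir {n} (x : vec n) (C : vec n -> Prop) : vec n -> Prop :=
  fun d => exists eps, 0 < eps /\ C (vadd x (vscal eps d)).

Section FeasibleDirections.
Context {n : nat}.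
Implicit Types C D K : vec n -> Prop.

Lemma feas_dir_convex C x : is_convex C -> C x -> is_convex (feas_dir x C).
Proof.
  intros Hcv Hx d1 d2 t [e1 [He1 H1]] [e2 [He2 H2]] [Ht0 Ht1].
  set (D := (1 - t) * e2 + t * e1). assert (0 < D) by (unfold D; nra).
  set (s := e1 * t / D).
  assert (0 <= s <= 1).
  { unfold s. split; [apply Rmult_le_pos; [nra|left; apply Rinv_0_lt_compat; lra]|].
    apply Rmult_le_reg_r with D; [lra|]. unfold Rdiv. rewrite Rmult_assoc, Rinv_l by lra.
    unfold D. nra. }
  exists (e1 * e2 / D). split; [apply Rdiv_lt_0_compat; nra|].
  replace (vadd x (vscal (e1 * e2 / D) (vadd (vscal (1 - t) d1) (vscal t d2))))
    with (vadd (vscal (1 - s) (vadd x (vscal e1 d1))) (vscal s (vadd x (vscal e2 d2))))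
    by (vec_ext; unfold s, D in *; field; lra).
  apply Hcv; auto.
Qed.

Lemma feas_dir_cone C x : C x -> is_cone (feas_dir x C).
Proof.
  intros Hx. split.
  - exists 1. split; [lra|]. replace (vadd x (vscal 1 vzero)) with x by (vec_ext; ring). auto.
  - intros d t [e [He Hd]] Ht. destruct (Req_dec t 0) as [->|Htn].
    + exists 1. split; [lra|].
      replace (vadd x (vscal 1 (vscal 0 d))) with x by (vec_ext; ring). auto.
    + exists (e / t). split; [apply Rdiv_lt_0_compat; lra|].
      replace (vadd x (vscal (e / t) (vscal t d))) with (vadd x (vscal e d))
        by (vec_ext; field; auto). auto.
Qed.

Lemma feas_dir_mem C x f : is_convex C -> is_cone C -> C x -> C f -> feas_dir x C f.
Proof.
  intros Hcv Hcone Hx Hf. exists 1. split; [lra|].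
  replace (vadd x (vscal 1 f)) with (vadd x f) by (vec_ext; ring). apply cone_add; auto.
Qed.

Lemma feas_dir_opp C x : is_cone C -> C x -> feas_dir x C (vscal (-1) x).
Proof.
  intros [_ Cs] Hx. exists (/2). split; [lra|].
  replace (vadd x (vscal (/2) (vscal (-1) x))) with (vscal (/2) x) by (vec_ext; field).
  apply Cs; auto; lra.
Qed.

Lemma feas_dir_span C x : C x -> subset (feas_dir x C) (in_span C).
Proof.
  intros Hx d [e [He Hd]].
  replace d with (vscal (/e) (vadd (vadd x (vscal e d)) (vscal (-1) x))) by (vec_ext; field; lra).
  apply span_scal, span_add; [apply span_mem; auto|apply span_scal, span_mem; auto].
Qed.

Lemma tangent_cone_span C x : C x -> subset (tangent_cone x C) (in_span C).
Proof. intros Hx d Hd. apply span_closed. exact (cl_mono _ _ (feas_dir_span C x Hx) d Hd). Qed.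

Lemma tangent_cone_mono C D x : subset C D -> subset (tangent_cone x C) (tangent_cone x D).
Proof. intros CD. apply cl_mono. intros d [e [He Hd]]. exists e; auto. Qed.

Lemma dual_nonneg_tangent K k x d :
  dual_cone K k -> dot k x = 0 -> tangent_cone x K d -> 0 <= dot k d.
Proof.
  intros Hk Hkx. apply cl_dot_nonneg. intros d' [e [He Hd']].
  specialize (Hk _ Hd'). rewrite dot_add_r, dot_scal_r, Hkx in Hk. nra.
Qed.

End FeasibleDirections.

Section Faces.
Context {n : nat} (K F : vec n -> Prop).
Hypotheses (Kcone : is_cone K) (HF : is_face F K).

Lemma face_cone x : F x -> is_cone F.
Proof.
  intros Hx. pose proof HF as [_ [Fcv [FK Fext]]]. pose proof Kcone as [K0 Ks].
  assert (F0 : F vzero).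
  { refine (proj1 (Fext x vzero (vscal 2 x) Hx K0 (Ks x 2 (FK x Hx) ltac:(lra)) _)).
    exists (/2). split; [lra|]. vec_ext. field. }
  split; [exact F0|]. intros f t Hf Ht. destruct (Rle_or_lt t 1).
  - replace (vscal t f) with (vadd (vscal (1 - t) vzero) (vscal t f)) by (vec_ext; ring).
    apply Fcv; auto.
  - refine (proj2 (Fext f vzero (vscal t f) Hf K0 (Ks f t (FK f Hf) Ht) _)).
    exists (/t). split.
    + split; [apply Rinv_0_lt_compat; lra|]. rewrite <- Rinv_1. apply Rinv_lt_contravar; lra.
    + vec_ext. field. lra.
Qed.

Lemma face_span_mem x y : F x -> K y -> in_span F y -> F y.
Proof.
  intros Hx Ky Hy. pose proof HF as [_ [Fcv [FK Fext]]].
  pose proof (face_cone x Hx) as Fcone.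
  destruct (cone_span_diff F y Fcv Fcone Hy) as [a [b [Ha [Hb ->]]]].
  assert (Fa : F (vscal (/2) a)) by (apply Fcone; auto; lra).
  refine (proj1 (Fext _ (vsub a b) b Fa Ky (FK b Hb) _)).
  exists (/2). split; [lra|]. vec_ext. field.
Qed.

End Faces.

Lemma face_dual_sum_mem {n} (K F : vec n -> Prop) x s :
  is_closed K -> is_convex K -> is_cone K -> is_face F K -> F x ->
  is_closed (set_sum (dual_cone K) (perp F)) ->
  (forall f, F f -> 0 <= dot s f) -> set_sum (dual_cone K) (perp F) s.
Proof.
  intros Kcl Kcv Kcone HF Hx Gcl HsF.
  set (G := set_sum (dual_cone K) (perp F)).
  pose proof (perp_subspace F) as HP. pose proof HP as [P0 [_ Pscal]].
  assert (Gcv : is_convex G).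
  { apply set_sum_convex; [apply dual_cone_convex|apply subspace_convex, HP]. }
  assert (Gcone : is_cone G).
  { apply set_sum_cone; [apply dual_cone_cone|apply subspace_cone, HP]. }
  apply NNPP. intros HsG.
  destruct (cone_separation G s Gcl Gcv Gcone HsG) as [y [Hy Hys]].
  (* [y] lies in [K ∩ span F = F], on which [s] is nonnegative *)
  assert (Ky : K y).
  { apply closed_cone_bidual; auto. intros w Hw. rewrite dot_comm.
    apply Hy, set_sum_l; auto. }
  assert (Sy : in_span F y).
  { apply span_perp_perp. intros g Hg. rewrite dot_comm.
    pose proof (dual_cone_cone K) as [D0 _].
    pose proof (Hy g (set_sum_r _ _ g D0 Hg)).
    pose proof (Hy _ (set_sum_r _ _ _ D0 (Pscal (-1) g Hg))) as Hopp.
    rewrite dot_scal_r in Hopp. lra. }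
  pose proof (HsF y (face_span_mem K F Kcone HF x y Hx Ky Sy)).
  rewrite dot_comm in Hys. lra.
Qed.

Theorem theorem3p1 (n : nat) (K : vec n -> Prop) :
  is_closed K -> is_convex K -> is_cone K -> FDC K -> tangentially_exposed K.
Proof.
  intros Kcl Kcv Kcone Hfdc F HF HFK x Hx d.
  pose proof HF as [_ [Fcv [FK _]]].
  pose proof (face_cone K F Kcone HF x Hx) as Fcone.
  split.
  - intros [Td Sd]. apply NNPP. intros Hnot.
    destruct (cone_separation (tangent_cone x F) d (cl_closed _)
                (cl_convex _ (feas_dir_convex F x Fcv Hx)) (cl_cone _ (feas_dir_cone F x Hx)) Hnot)
      as [s [Hs Hsd]].
    assert (Hsx : dot s x = 0).
    { pose proof (Hs _ (subset_cl _ _ (feas_dir_mem F x x Fcv Fcone Hx Hx))).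
      pose proof (Hs _ (subset_cl _ _ (feas_dir_opp F x Fcone Hx))) as Hopp.
      rewrite dot_scal_r in Hopp. lra. }
    assert (HsF : forall f, F f -> 0 <= dot s f)
      by (intros f Hf; apply Hs, subset_cl, feas_dir_mem; auto).
    destruct (face_dual_sum_mem K F x s Kcl Kcv Kcone HF Hx
                (Hfdc F HF (ex_intro _ x Hx) HFK) HsF) as [k [g [Hk [Hg ->]]]].
    rewrite dot_add_l, (Hg x Hx) in Hsx. rewrite dot_add_l, (perp_span F g d Hg Sd) in Hsd.
    pose proof (dual_nonneg_tangent K k x d Hk ltac:(lra) Td). lra.
  - intros Td. split.
    + exact (tangent_cone_mono F K x FK d Td).
    + exact (tangent_cone_span F x Hx d Td).
Qed.
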